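(* Let $\mathbb G=V_1\times V_2$ be a step-two Carnot group with $\dim V_2=3$. Then $\mathcal A(V_1\times V_2)\subsetneq\mathcal A_h(\mathbb G)$ if and only if $\mathbb G$ is isomorphic to the direct product $\mathbb F_3\times\mathbb R^d$ for some integer $d\geq0$.
   Context: A step-two Carnot group is $\mathbb G=V_1\times V_2$ ($V_1,V_2$ finite-dimensional real vector spaces, $V_2\ne\{0\}$) with a bilinear skew-symmetric $[\cdot,\cdot]:V_1\times V_1\to V_2$ whose image spans $V_2$, and group law $(x,z)\cdot(x',z')=(x+x',z+z'+[x,x'])$. $\mathcal A_h(\mathbb G)$ is the space of maps $f:\mathbb G\to\mathbb R$ such that for all $(x,z)\in\mathbb G$, $y\in V_1$, $t\mapsto f((x,z)\cdot(ty,0))$ is affine; $\mathcal A(V_1\times V_2)$ is the space of maps affine in the usual sense. $\mathbb F_3=\Lambda^1(\mathbb R^3)\times\Lambda^2(\mathbb R^3)$ with bracket $[\theta,\theta']=\theta\wedge\theta'$; $\mathbb F_3\times\mathbb R^d$ is $(\Lambda^1(\mathbb R^3)\oplus\mathbb R^d)\times\Lambda^2(\mathbb R^3)$ with bracket $[\theta+u,\theta'+u']:=\theta\wedge\theta'$. Two step-two Carnot groups are isomorphic if there is a bijective Carnot morphism between them, where a Carnot morphism is $\pi(x,z)=(\pi_1(x),\pi_2(z))$ with $\pi_1,\pi_2$ linear and $\pi_2([x,y])=[\pi_1(x),\pi_1(y)]'$. *)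

From HB Require Import structures.
From mathcomp Require Import all_boot all_order all_algebra.
From mathcomp Require Import reals.
Set Implicit Arguments. Unset Strict Implicit. Unset Printing Implicit Defensive.
Import Order.TTheory GRing.Theory Num.Theory.
Local Open Scope ring_scope.

(* A step-two Carnot group structure on V1 x V2 with V1 = 'rV[R]_n and
   V2 = 'rV[R]_m (finite-dimensional real vector spaces, fixed bases):
   a bilinear skew-symmetric bracket whose image spans V2. *)
Definition bilinear_bracket (R : realType) (n m : nat)
  (br : 'rV[R]_n -> 'rV[R]_n -> 'rV[R]_m) : Prop :=
  (forall (a : R) (x y z : 'rV[R]_n), br (a *: x + y) z = a *: br x z + br y z) /\
  (forall (a : R) (x y z : 'rV[R]_n), br z (a *: x + y) = a *: br z x + br z y).

Definition skew_bracket (R : realType) (n m : nat)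
  (br : 'rV[R]_n -> 'rV[R]_n -> 'rV[R]_m) : Prop :=
  forall x y, br x y = - br y x.

Definition bracket_spans (R : realType) (n m : nat)
  (br : 'rV[R]_n -> 'rV[R]_n -> 'rV[R]_m) : Prop :=
  forall z : 'rV[R]_m, exists (k : nat) (c : 'I_k -> R) (xs ys : 'I_k -> 'rV[R]_n),
    z = \sum_(i < k) c i *: br (xs i) (ys i).

Definition step_two_carnot (R : realType) (n m : nat)
  (br : 'rV[R]_n -> 'rV[R]_n -> 'rV[R]_m) : Prop :=
  (0 < m)%N /\ bilinear_bracket br /\ skew_bracket br /\ bracket_spans br.

Definition carnot_mul (R : realType) (n m : nat)
  (br : 'rV[R]_n -> 'rV[R]_n -> 'rV[R]_m)
  (p q : 'rV[R]_n * 'rV[R]_m) : 'rV[R]_n * 'rV[R]_m :=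
  (p.1 + q.1, p.2 + q.2 + br p.1 q.1).

Definition affine_R (R : realType) (g : R -> R) : Prop :=
  exists a b : R, forall t, g t = a + b * t.

(* A_h(G): f affine along every horizontal line t |-> p.(t y, 0) *)
Definition horiz_affine (R : realType) (n m : nat)
  (br : 'rV[R]_n -> 'rV[R]_n -> 'rV[R]_m)
  (f : 'rV[R]_n * 'rV[R]_m -> R) : Prop :=
  forall (p : 'rV[R]_n * 'rV[R]_m) (y : 'rV[R]_n),
    affine_R (fun t => f (carnot_mul br p (t *: y, 0))).

(* A(V1 x V2): affine maps in the usual sense (constant + linear form) *)
Definition affine_map (R : realType) (n m : nat)
  (f : 'rV[R]_n * 'rV[R]_m -> R) : Prop :=
  exists (c : R) (a : 'cV[R]_n) (b : 'cV[R]_m),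
    forall x z, f (x, z) = c + (x *m a) 0 0 + (z *m b) 0 0.

(* F_3 x R^d: V1 = Lambda^1(R^3) (+) R^d = 'rV_(3+d) (first 3 coordinates in
   the basis e1,e2,e3 of Lambda^1), V2 = Lambda^2(R^3) = 'rV_3 in the basis
   e1^e2, e1^e3, e2^e3; bracket [th+u, th'+u'] = th ^ th'. *)
Definition wedge3 (R : realType) (u v : 'rV[R]_3) : 'rV[R]_3 :=
  \row_(k < 3)
    (if val k == 0%N then u 0 0 * v 0 1 - u 0 1 * v 0 0
     else if val k == 1%N then u 0 0 * v 0 2 - u 0 2 * v 0 0
     else u 0 1 * v 0 2 - u 0 2 * v 0 1).

Definition F3Rd_bracket (R : realType) (d : nat)
  (x y : 'rV[R]_(3 + d)) : 'rV[R]_3 :=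
  wedge3 (lsubmx x) (lsubmx y).

Definition carnot_isomorphic (R : realType) (n m n' m' : nat)
  (br : 'rV[R]_n -> 'rV[R]_n -> 'rV[R]_m)
  (br' : 'rV[R]_n' -> 'rV[R]_n' -> 'rV[R]_m') : Prop :=
  exists (P1 : 'M[R]_(n, n')) (P2 : 'M[R]_(m, m')),
    (forall x y, br x y *m P2 = br' (x *m P1) (y *m P1)) /\
    bijective (fun p : 'rV[R]_n * 'rV[R]_m => (p.1 *m P1, p.2 *m P2)).

From HB Require Import structures.
From mathcomp Require Import all_boot all_order all_algebra.
From mathcomp Require Import reals boolp.
From mathcomp Require Import ring lra.
Set Implicit Arguments. Unset Strict Implicit. Unset Printing Implicit Defensive.
Import Order.TTheory GRing.Theory Num.Theory.
Local Open Scope ring_scope.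

(* If G is isomorphic to F_3 x R^d, pairing the Lambda^1(R^3)-component of x
   with z gives a function (theta, omega) |-> theta ^ omega that is affine on
   horizontal lines, because theta ^ theta ^ theta' = 0, but is not affine.

   Conversely, let f be affine on horizontal lines. On every coset of the
   Heisenberg subgroup generated by two horizontal directions, f is affine.
   Hence f (x, z) = F z + l_z x with l_z linear and l_(z + c [x, y]) y = l_z y.
   If some ad x maps onto V_2, this forces f to be affine. If some triple
   [x, a], [x, b], [a, b] is a basis of V_2, then F and z |-> l_z y are affine,
   so B y z := l_z y - l_0 y is bilinear, kills [x, y], and is nonzero when f
   is not affine. Since the brackets span V_2 = R^3, one of these two cases
   occurs. Finally B y [x, u] is an alternating 3-form on V_1. Any a1, a2, a3
   on which it does not vanish split V_1 into span (a1, a2, a3) plus a central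
   complement, with [a_i, a_j] a basis of V_2, and this is F_3 x R^d. *)

(** * Affine functions on the Heisenberg group *)

Section AffineLine.
Variable R : realType.
Implicit Types h : R -> R.

Lemma affine_R_interp h : affine_R h -> forall r, h r = h 0 + r * (h 1 - h 0).
Proof. by case=> a [b Hb] r; rewrite !Hb; ring. Qed.

Lemma affine_R_ext h1 h2 : h1 =1 h2 -> affine_R h1 -> affine_R h2.
Proof. by move=> E [a [b H]]; exists a, b => r; rewrite -E. Qed.

Lemma affine_RD h1 h2 : affine_R h1 -> affine_R h2 -> affine_R (fun r => h1 r + h2 r).
Proof. by case=> a [b H] [c [d K]]; exists (a + c), (b + d) => r; rewrite H K; ring. Qed.

Lemma affine_RN h : affine_R h -> affine_R (fun r => - h r).
Proof. by case=> a [b H]; exists (- a), (- b) => r; rewrite H; ring. Qed.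

Lemma affine_RZ k h : affine_R h -> affine_R (fun r => k * h r).
Proof. by case=> a [b H]; exists (k * a), (k * b) => r; rewrite H; ring. Qed.

Lemma affine_R_dilate k h : affine_R h -> affine_R (fun r => h (k * r)).
Proof. by case=> a [b H]; exists a, (b * k) => r; rewrite H; ring. Qed.

Lemma affine_R_diff2 h : affine_R h -> h 0 - 2 * h 1 + h 2 = 0.
Proof. by case=> a [b H]; rewrite !H; ring. Qed.

End AffineLine.

Section HeisenbergAffine.
Variable R : realType.
Variable g : R -> R -> R -> R.
(* The horizontal lines of the Heisenberg group with law
   (s, t, c) (s', t', c') = (s + s', t + t', c + c' + s t' - t s'). *)
Hypothesis g_horiz : forall s0 t0 c0 l m,
  affine_R (fun r => g (s0 + r * l) (t0 + r * m) (c0 + r * (s0 * m - t0 * l))).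

Lemma heis_line_interp s0 t0 c0 l m r s t c s1 t1 c1 :
  s = s0 + r * l -> t = t0 + r * m -> c = c0 + r * (s0 * m - t0 * l) ->
  s1 = s0 + l -> t1 = t0 + m -> c1 = c0 + (s0 * m - t0 * l) ->
  g s t c = g s0 t0 c0 + r * (g s1 t1 c1 - g s0 t0 c0).
Proof.
move=> -> -> -> -> -> ->.
by rewrite (affine_R_interp (g_horiz _ _ _ _ _) r) !mul0r !mul1r !addr0.
Qed.

Let g_center c := g 0 0 c.
Let g_slope c m := g 1 m c - g_center c.

Lemma heis_radial s t c : s != 0 -> g s t c = g_center c + s * g_slope c (t / s).
Proof.
move=> s0; apply: (@heis_line_interp 0 0 c 1 (t / s) s);
  rewrite ?add0r ?mulr1 ?mul0r ?subrr ?mulr0 ?addr0 //.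
by rewrite mulrC divfK.
Qed.

(* The lines in direction (0, 1) through (sig, t0, c0) and (-sig, -t0, c0). *)
Lemma heis_vertical_lines (sig t0 c0 : R) : sig != 0 ->
  affine_R (fun r => g_center (c0 + r * sig) + sig * g_slope (c0 + r * sig) ((t0 + r) / sig)) /\
  affine_R (fun r => g_center (c0 + r * sig) - sig * g_slope (c0 + r * sig) ((t0 + r) / sig)).
Proof.
move=> s0; split.
- apply: affine_R_ext (g_horiz sig t0 c0 0 1) => r /=.
  have -> : g (sig + r * 0) (t0 + r * 1) (c0 + r * (sig * 1 - t0 * 0))
    = g sig (t0 + r) (c0 + r * sig) by congr g; ring.
  by rewrite heis_radial.
- apply: affine_R_ext (g_horiz (- sig) (- t0) c0 0 (-1)) => r /=.
  have -> : g (- sig + r * 0) (- t0 + r * -1) (c0 + r * (- sig * -1 - - t0 * 0))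
    = g (- sig) (- t0 - r) (c0 + r * sig) by congr g; ring.
  rewrite heis_radial ?oppr_eq0 //.
  have -> : (- t0 - r) / - sig = (t0 + r) / sig by field.
  ring.
Qed.

Lemma g_center_affine c : g_center c = g_center 0 + c * (g_center 1 - g_center 0).
Proof.
have [H1 H2] := heis_vertical_lines 0 0 (oner_neq0 R).
have H : affine_R g_center.
  by apply: affine_R_ext (affine_RZ (1/2) (affine_RD H1 H2)) => r /=; rewrite add0r mulr1; field.
exact: affine_R_interp H c.
Qed.

Lemma g_slope_affine_dir (sig : R) u0 m0 : sig != 0 ->
  affine_R (fun rho => g_slope (u0 + sig ^+ 2 * rho) (m0 + rho)).
Proof.
move=> s0; have [H1 H2] := heis_vertical_lines (sig * m0) u0 s0.
have H : affine_R (fun r => g_slope (u0 + r * sig) ((sig * m0 + r) / sig)).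
  apply: affine_R_ext (affine_RZ (1 / (2 * sig)) (affine_RD H1 (affine_RN H2))) => r /=.
  by field.
apply: affine_R_ext (affine_R_dilate sig H) => rho /=.
by congr g_slope; field.
Qed.

Lemma g_slope_affine : exists k0 k1 k2, forall u m, g_slope u m = k0 + k1 * u + k2 * m.
Proof.
(* In the coordinates u = a + 4 b, m = a + b the directions (sig^2, 1) of
   [g_slope_affine_dir] for sig = 1, 2, 3 are the two axes and (-5/3, 8/3):
   the first two leave only a term a b, which the third one kills. *)
pose K a b := g_slope (a + 4 * b) (a + b).
have Ka b : affine_R (fun a => K a b).
  apply: affine_R_ext (g_slope_affine_dir (4 * b) b (oner_neq0 R)) => a /=.
  by rewrite /K expr1n mul1r addrC [b + a]addrC.
have Kb a : affine_R (fun b => K a b).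
  apply: affine_R_ext (g_slope_affine_dir a a (_ : 2 != 0)) => [b|]; last by rewrite pnatr_eq0.
  by rewrite /K; congr g_slope; ring.
set e := K 1 1 - K 1 0 - K 0 1 + K 0 0.
have KE a b : K a b = K 0 0 + a * (K 1 0 - K 0 0) + b * (K 0 1 - K 0 0) + a * b * e.
  rewrite /e (affine_R_interp (Ka b) a).
  by rewrite (affine_R_interp (Kb 0) b) (affine_R_interp (Kb 1) b); ring.
have e0 : e = 0.
  have Kd : affine_R (fun rho => K (- (5/3) * rho) ((8/3) * rho)).
    apply: affine_R_ext (g_slope_affine_dir 0 0 (_ : 3 != 0)) => [rho|]; last by rewrite pnatr_eq0.
    by rewrite /K; congr g_slope; field.
  have := affine_R_diff2 Kd => /=.
  rewrite (KE (- (5/3) * 0)) (KE (- (5/3) * 1)) (KE (- (5/3) * 2)) => H.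
  have : e * (80 / 9) = 0 by rewrite -oppr0 -H; field.
  by move/eqP; rewrite mulf_eq0 mulf_eq0 invr_eq0 !pnatr_eq0 orbF => /eqP.
exists (K 0 0), ((K 1 0 - K 0 0) * (-1/3) + (K 0 1 - K 0 0) * (1/3)),
  ((K 1 0 - K 0 0) * (4/3) + (K 0 1 - K 0 0) * (-1/3)) => u m.
have -> : g_slope u m = K ((4 * m - u) / 3) ((u - m) / 3) by rewrite /K; congr g_slope; field.
by rewrite (KE ((4 * m - u) / 3)) e0; field.
Qed.

Lemma heis_horiz_affine :
  exists k0 k1 k2 k3, forall s t c, g s t c = k0 + k1 * s + k2 * t + k3 * c.
Proof.
(* Off s = 0, [heis_radial] gives g up to a term k1 s c; one horizontal line
   kills k1, another one reaches s = 0. *)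
have [k0 [k1 [k2 KE]]] := g_slope_affine.
set g0 := g_center 0; set g1 := g_center 1 - g_center 0.
have gE s t c : s != 0 -> g s t c = g0 + g1 * c + k0 * s + k1 * (s * c) + k2 * t.
  by move=> s0; rewrite heis_radial // KE g_center_affine -/g0 -/g1; field.
have k1_0 : k1 = 0.
  have : g 3 1 (-2) = g 1 1 0 + 2 * (g 2 1 (-1) - g 1 1 0).
    by apply: (heis_line_interp (l := 1) (m := 0)); ring.
  by rewrite !gE ?pnatr_eq0 ?oner_neq0 //; lra.
exists g0, k0, k2, g1 => s t c.
have [->|s0] := eqVneq s 0; last by rewrite gE // k1_0; ring.
have -> : g 0 t c = g 2 t (c - 2 * t) + 2 * (g 1 t (c - t) - g 2 t (c - 2 * t)).
  by apply: (heis_line_interp (l := -1) (m := 0)); ring.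
by rewrite !gE ?pnatr_eq0 ?oner_neq0 // k1_0; ring.
Qed.

End HeisenbergAffine.

Section LinearAlgebra.
Variable F : fieldType.

Lemma mul_rV_lin1_additive m k (phi : 'rV[F]_m -> 'rV[F]_k) :
  {morph phi : x y / x + y} -> (forall c x, phi (c *: x) = c *: phi x) ->
  forall x, x *m lin1_mx phi = phi x.
Proof.
move=> phiD phiZ x; have phi0 : phi 0 = 0 by rewrite -(scale0r 0) phiZ scale0r.
rewrite [x in RHS]row_sum_delta (big_morph phi phiD phi0); apply/rowP => j.
by rewrite !mxE summxE; apply: eq_bigr => i _; rewrite phiZ !mxE.
Qed.

Lemma row_full_extend n k (A : 'M[F]_(n, k)) : row_full A ->
  exists d (C : 'M[F]_(n, d)) (Q : 'M[F]_(k + d, n)),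
    Q *m row_mx A C = 1%:M /\ row_mx A C *m Q = 1%:M.
Proof.
move=> fullA; have rAT : \rank A^T = k by rewrite mxrank_tr; apply/eqP.
set C := (row_base (A^T^C)%MS)^T; exists (\rank (A^T^C)%MS), C.
have rP : \rank (row_mx A C) = n.
  rewrite -mxrank_tr tr_row_mx trmxK -addsmxE.
  rewrite (adds_eqmx (eqmx_refl _) (eq_row_base _)).
  exact/eqP/addsmx_compl_full.
have kn : (k <= n)%N by rewrite -rAT rank_leq_col.
have freeP : row_free (row_mx A C) by rewrite /row_free rP.
have fullP : row_full (row_mx A C) by rewrite /row_full rP mxrank_compl rAT subnKC.
have [[Q HQ] [Q' HQ']] := (row_freeP freeP, row_fullP fullP).
have QQ : Q' = Q by rewrite -[Q']mulmx1 -HQ mulmxA HQ' mul1mx.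
by exists Q; split; [rewrite -QQ |].
Qed.

Lemma bijective_mulmx_pair m1 m2 n1 n2 (P1 : 'M[F]_(m1, n1)) (P2 : 'M[F]_(m2, n2))
    (Q1 : 'M[F]_(n1, m1)) (Q2 : 'M[F]_(n2, m2)) :
  P1 *m Q1 = 1%:M -> Q1 *m P1 = 1%:M -> P2 *m Q2 = 1%:M -> Q2 *m P2 = 1%:M ->
  bijective (fun p : 'rV[F]_m1 * 'rV[F]_m2 => (p.1 *m P1, p.2 *m P2)).
Proof.
move=> PQ1 QP1 PQ2 QP2; exists (fun q => (q.1 *m Q1, q.2 *m Q2)) => -[x z] /=.
  by rewrite -!mulmxA PQ1 PQ2 !mulmx1.
by rewrite -!mulmxA QP1 QP2 !mulmx1.
Qed.

Lemma affine_planes_span3 (V : lmodType F) (phi : V -> F) :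
  (forall a b, exists k0 k1 k2, forall s t, phi (s *: a + t *: b) = k0 + k1 * s + k2 * t) ->
  forall b c d s t r, phi (s *: b + t *: c + r *: d)
    = phi 0 + s * (phi b - phi 0) + t * (phi c - phi 0) + r * (phi d - phi 0).
Proof.
move=> phi_plane.
have phi2 a b s t : phi (s *: a + t *: b) = phi 0 + s * (phi a - phi 0) + t * (phi b - phi 0).
  have [k0 [k1 [k2 K]]] := phi_plane a b.
  have := K 0 0; have := K 1 0; have := K 0 1.
  rewrite !scale0r !scale1r !addr0 add0r => Kb Ka K0.
  by rewrite K Ka Kb K0; ring.
move=> b c d s t r.
by rewrite -[s *: b + t *: c]scale1r phi2 phi2; ring.
Qed.

End LinearAlgebra.

Section Vectors3.
Variable R : realType.
Implicit Types u v w z m : 'rV[R]_3.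

Definition mk3 (a b c : R) : 'rV[R]_3 :=
  \row_(k < 3) (if val k == 0%N then a else if val k == 1%N then b else c).
Definition dot3 u v : R := u 0 0 * v 0 0 + u 0 1 * v 0 1 + u 0 2 * v 0 2.
Definition cross3 u v : 'rV[R]_3 :=
  mk3 (u 0 1 * v 0 2 - u 0 2 * v 0 1) (u 0 2 * v 0 0 - u 0 0 * v 0 2)
      (u 0 0 * v 0 1 - u 0 1 * v 0 0).
Definition det3 u v w := dot3 (cross3 u v) w.

Lemma row3_eq u v : u 0 0 = v 0 0 -> u 0 1 = v 0 1 -> u 0 2 = v 0 2 -> u = v.
Proof.
move=> h0 h1 h2; apply/rowP => i; rewrite [0 : 'I_1](_ : _ = ord0) //.
case: i => [[|[|[|i]]] Hi] //.
- by rewrite (_ : Ordinal Hi = 0) //; apply: val_inj.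
- by rewrite (_ : Ordinal Hi = 1) //; apply: val_inj.
- by rewrite (_ : Ordinal Hi = 2) //; apply: val_inj.
Qed.

Ltac vec3_ring := apply: row3_eq; rewrite /det3 /dot3 /cross3 /mk3 ?mxE /=; ring.
Ltac dot3_ring := rewrite /det3 /dot3 /cross3 /mk3 ?mxE /=; ring.

Lemma mk3_0 a b c : (mk3 a b c) 0 0 = a. Proof. by rewrite mxE. Qed.
Lemma mk3_1 a b c : (mk3 a b c) 0 1 = b. Proof. by rewrite mxE. Qed.
Lemma mk3_2 a b c : (mk3 a b c) 0 2 = c. Proof. by rewrite mxE. Qed.

Lemma dot3C u v : dot3 u v = dot3 v u. Proof. dot3_ring. Qed.
Lemma dot3Dl u v w : dot3 (u + v) w = dot3 u w + dot3 v w. Proof. dot3_ring. Qed.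
Lemma dot3Dr u v w : dot3 w (u + v) = dot3 w u + dot3 w v. Proof. dot3_ring. Qed.
Lemma dot3Zl a u w : dot3 (a *: u) w = a * dot3 u w. Proof. dot3_ring. Qed.
Lemma dot3Zr a u w : dot3 w (a *: u) = a * dot3 w u. Proof. dot3_ring. Qed.
Lemma dot30l w : dot3 0 w = 0. Proof. dot3_ring. Qed.
Lemma dot30r w : dot3 w 0 = 0. Proof. dot3_ring. Qed.
Lemma cross3Dl u v w : cross3 (u + v) w = cross3 u w + cross3 v w. Proof. vec3_ring. Qed.
Lemma cross3Dr u v w : cross3 w (u + v) = cross3 w u + cross3 w v. Proof. vec3_ring. Qed.
Lemma cross3Zl a u w : cross3 (a *: u) w = a *: cross3 u w. Proof. vec3_ring. Qed.
Lemma cross3Zr a u w : cross3 w (a *: u) = a *: cross3 w u. Proof. vec3_ring. Qed.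
Lemma cross3Nl u w : cross3 (- u) w = - cross3 u w. Proof. vec3_ring. Qed.
Lemma cross3Nr u w : cross3 w (- u) = - cross3 w u. Proof. vec3_ring. Qed.
Lemma cross30r u : cross3 u 0 = 0. Proof. vec3_ring. Qed.
Lemma cross3uu u : cross3 u u = 0. Proof. vec3_ring. Qed.
Lemma det3Dm u v v' w : det3 u (v + v') w = det3 u v w + det3 u v' w. Proof. dot3_ring. Qed.
Lemma det3Zm u v w k : det3 u (k *: v) w = k * det3 u v w. Proof. dot3_ring. Qed.
Lemma det3uu u w : det3 u u w = 0. Proof. dot3_ring. Qed.

Lemma cramer3 u v w z :
  det3 u v w *: z
  = dot3 z (cross3 v w) *: u + dot3 z (cross3 w u) *: v + dot3 z (cross3 u v) *: w.
Proof. vec3_ring. Qed.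

Lemma cramer3_dual u v w z :
  det3 u v w *: z
  = dot3 u z *: cross3 v w + dot3 v z *: cross3 w u + dot3 w z *: cross3 u v.
Proof. vec3_ring. Qed.

Lemma cross3_plane_decomp u v w :
  dot3 (cross3 u v) (cross3 u v) *: w = det3 u v w *: cross3 u v
    + dot3 (cross3 w v) (cross3 u v) *: u + dot3 (cross3 u w) (cross3 u v) *: v.
Proof. vec3_ring. Qed.

Lemma det3_dot3 b1 b2 b3 n1 n2 n3 :
  det3 (mk3 (dot3 b1 n1) (dot3 b1 n2) (dot3 b1 n3))
       (mk3 (dot3 b2 n1) (dot3 b2 n2) (dot3 b2 n3))
       (mk3 (dot3 b3 n1) (dot3 b3 n2) (dot3 b3 n3)) = det3 b1 b2 b3 * det3 n1 n2 n3.
Proof. dot3_ring. Qed.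

Lemma dot3_self_eq0 m : (dot3 m m == 0) = (m == 0).
Proof.
apply/eqP/eqP => [|->]; last exact: dot30l.
rewrite /dot3 -!expr2 => H.
have := sqr_ge0 (m 0 0); have := sqr_ge0 (m 0 1); have := sqr_ge0 (m 0 2) => p2 p1 p0.
have sq0 (x : R) : x ^+ 2 = 0 -> x = 0 by move/eqP; rewrite sqrf_eq0 => /eqP.
by apply: row3_eq; rewrite mxE; apply: sq0; lra.
Qed.

Lemma dot3_all0 m : (forall z, dot3 m z = 0) -> m = 0.
Proof. by move=> H; apply/eqP; rewrite -dot3_self_eq0 H. Qed.

Lemma cross3_all0 u : (forall z, cross3 u z = 0) -> u = 0.
Proof.
move=> H; have /rowP e1 := H (mk3 1 0 0); have /rowP e2 := H (mk3 0 1 0).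
have := e1 1; have := e1 2; have := e2 2; rewrite /cross3 /mk3 !mxE /= => ? ? ?.
by apply: row3_eq; rewrite mxE; lra.
Qed.

Lemma cross3_eq0_trans u v w : v != 0 -> cross3 v u = 0 -> cross3 v w = 0 -> cross3 u w = 0.
Proof.
move=> v0 vu vw; have vv : dot3 v v != 0 by rewrite dot3_self_eq0.
have E x : dot3 v v *: x = dot3 v x *: v - cross3 v (cross3 v x) by vec3_ring.
apply: (scalerI vv); rewrite scaler0 -cross3Zl E vu cross30r subr0.
by rewrite cross3Zl vw scaler0.
Qed.

Lemma det3_neq0_span u v w : det3 u v w != 0 ->
  forall z, exists s t c, z = s *: u + t *: v + c *: w.
Proof.
move=> D0 z; set D := det3 u v w.
exists (dot3 z (cross3 v w) / D), (dot3 z (cross3 w u) / D), (dot3 z (cross3 u v) / D).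
by apply: (scalerI D0); rewrite cramer3 !scalerDr !scalerA !(mulrC D) !divfK.
Qed.

Definition affine3 (h : 'rV[R]_3 -> R) := exists e bv, forall z, h z = e + dot3 bv z.

Lemma affine3_ext h1 h2 : h1 =1 h2 -> affine3 h1 -> affine3 h2.
Proof. by move=> E [e [bv H]]; exists e, bv => z; rewrite -E. Qed.

Lemma affine3D h1 h2 : affine3 h1 -> affine3 h2 -> affine3 (fun z => h1 z + h2 z).
Proof.
by move=> [e1 [b1 H1]] [e2 [b2 H2]]; exists (e1 + e2), (b1 + b2) => z; rewrite H1 H2 dot3Dl; ring.
Qed.

Lemma affine3Z c h : affine3 h -> affine3 (fun z => c * h z).
Proof. by move=> [e [b H]]; exists (c * e), (c *: b) => z; rewrite H dot3Zl; ring. Qed.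

Lemma affine3_basis u v w h e0 e1 e2 e3 : det3 u v w != 0 ->
  (forall s t c, h (s *: u + t *: v + c *: w) = e0 + e1 * s + e2 * t + e3 * c) -> affine3 h.
Proof.
move=> D0 hE; set D := det3 u v w.
exists e0, ((e1 / D) *: cross3 v w + (e2 / D) *: cross3 w u + (e3 / D) *: cross3 u v) => z.
have zE : z = (dot3 z (cross3 v w) / D) *: u + (dot3 z (cross3 w u) / D) *: v
            + (dot3 z (cross3 u v) / D) *: w.
  by apply: (scalerI D0); rewrite cramer3 !scalerDr !scalerA !(mulrC D) !divfK.
rewrite [in LHS]zE hE !dot3Dl !dot3Zl (dot3C _ z) (dot3C (cross3 w u) z) (dot3C (cross3 u v) z).
ring.
Qed.

(* [q e] is a polynomial of degree at most 2 (resp. 3) in e, so its value at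
   0 is a combination of its values at 1, 2, 3 (resp. 1, ..., 4). *)
Lemma det3_perturb2 u v w u' v' : det3 u v w != 0 ->
  exists e : R, e != 0 /\ det3 (u + e *: u') (v + e *: v') w != 0.
Proof.
move=> D0; pose q (e : R) := det3 (u + e *: u') (v + e *: v') w.
have I : det3 u v w = 3 * q 1 - 3 * q 2 + q 3 by rewrite /q; dot3_ring.
have [h1|h1] := eqVneq (q 1) 0; last by exists 1; rewrite oner_neq0.
have [h2|h2] := eqVneq (q 2) 0; last by exists 2; rewrite pnatr_eq0.
have [h3|h3] := eqVneq (q 3) 0; last by exists 3; rewrite pnatr_eq0.
by exfalso; move: D0; rewrite I h1 h2 h3 => /eqP; apply; ring.
Qed.

Lemma det3_perturb3 u v w u' v' w' : det3 u v w != 0 ->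
  exists e : R, e != 0 /\ det3 (u + e *: u') (v + e *: v') (w + e *: w') != 0.
Proof.
move=> D0; pose q (e : R) := det3 (u + e *: u') (v + e *: v') (w + e *: w').
have I : det3 u v w = 4 * q 1 - 6 * q 2 + 4 * q 3 - q 4 by rewrite /q; dot3_ring.
have [h1|h1] := eqVneq (q 1) 0; last by exists 1; rewrite oner_neq0.
have [h2|h2] := eqVneq (q 2) 0; last by exists 2; rewrite pnatr_eq0.
have [h3|h3] := eqVneq (q 3) 0; last by exists 3; rewrite pnatr_eq0.
have [h4|h4] := eqVneq (q 4) 0; last by exists 4; rewrite pnatr_eq0.
by exfalso; move: D0; rewrite I h1 h2 h3 h4 => /eqP; apply; ring.
Qed.

Lemma dot3_mulmx bv z : dot3 bv z = (z *m bv^T) 0 0.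
Proof.
rewrite /dot3 !mxE !big_ord_recr big_ord0 /= add0r !mxE.
rewrite (_ : widen_ord _ (widen_ord _ ord_max) = 0); last by apply: val_inj.
rewrite (_ : widen_ord _ ord_max = 1); last by apply: val_inj.
by rewrite (_ : ord_max = 2); [ring | apply: val_inj].
Qed.

Lemma mk3_neq0 : mk3 1 0 0 != 0.
Proof. by apply/eqP => /(congr1 (fun z => z 0 0)); rewrite !mxE /=; apply/eqP/oner_neq0. Qed.

Definition rows3 k (r0 r1 r2 : 'rV[R]_k) : 'M[R]_(3, k) :=
  \matrix_(i < 3, j < k)
    (if val i == 0%N then r0 0 j else if val i == 1%N then r1 0 j else r2 0 j).

Lemma rows3_row k (r0 r1 r2 : 'rV[R]_k) (i : 'I_3) :
  row i (rows3 r0 r1 r2) = if val i == 0%N then r0 else if val i == 1%N then r1 else r2.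
Proof. by apply/rowP => j; rewrite !mxE; case: ifP => _ //; case: ifP. Qed.

Lemma rows3_mul k l (r0 r1 r2 : 'rV[R]_k) (M : 'M[R]_(k, l)) :
  rows3 r0 r1 r2 *m M = rows3 (r0 *m M) (r1 *m M) (r2 *m M).
Proof. by apply/row_matrixP => i; rewrite row_mul !rows3_row; case: ifP => _ //; case: ifP. Qed.

Lemma rows3_id : rows3 (mk3 1 0 0) (mk3 0 1 0) (mk3 0 0 1) = 1%:M.
Proof.
apply/row_matrixP => i; rewrite rows3_row row1.
by case: i => [[|[|[|i]]] Hi] //=; apply: row3_eq; rewrite !mxE.
Qed.

Lemma mul_rows3 k (v : 'rV[R]_3) (r0 r1 r2 : 'rV[R]_k) :
  v *m rows3 r0 r1 r2 = v 0 0 *: r0 + v 0 1 *: r1 + v 0 2 *: r2.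
Proof.
rewrite mulmx_sum_row !big_ord_recr big_ord0 /= add0r !rows3_row /=.
rewrite (_ : widen_ord _ (widen_ord _ ord_max) = 0); last by apply: val_inj.
rewrite (_ : widen_ord _ ord_max = 1); last by apply: val_inj.
by rewrite (_ : ord_max = 2); last by apply: val_inj.
Qed.

Lemma rows3_unit u v w : det3 u v w != 0 -> rows3 u v w \in unitmx.
Proof.
move=> D0; rewrite -row_full_unit; apply/row_fullP.
have [s0 [t0 [c0 E0]]] := det3_neq0_span D0 (mk3 1 0 0).
have [s1 [t1 [c1 E1]]] := det3_neq0_span D0 (mk3 0 1 0).
have [s2 [t2 [c2 E2]]] := det3_neq0_span D0 (mk3 0 0 1).
exists (rows3 (mk3 s0 t0 c0) (mk3 s1 t1 c1) (mk3 s2 t2 c2)).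
by rewrite rows3_mul !mul_rows3 !mk3_0 !mk3_1 !mk3_2 -E0 -E1 -E2 rows3_id.
Qed.

End Vectors3.

(** * Horizontally affine functions *)

Ltac vec_ring := apply/rowP => i; rewrite !mxE; ring.

Section Bracket.
Variables (R : realType) (n : nat) (br : 'rV[R]_n -> 'rV[R]_n -> 'rV[R]_3).
Hypothesis br_bilin : bilinear_bracket br.
Hypothesis br_skew : skew_bracket br.
Implicit Types x y a b : 'rV[R]_n.

Lemma brDl x y z : br (x + y) z = br x z + br y z.
Proof. by have := br_bilin.1 1 x y z; rewrite !scale1r. Qed.
Lemma brDr x y z : br z (x + y) = br z x + br z y.
Proof. by have := br_bilin.2 1 x y z; rewrite !scale1r. Qed.
Lemma br0l z : br 0 z = 0.
Proof. by apply: (addrI (br 0 z)); rewrite -brDl !addr0. Qed.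
Lemma br0r z : br z 0 = 0.
Proof. by apply: (addrI (br z 0)); rewrite -brDr !addr0. Qed.
Lemma brZl c x z : br (c *: x) z = c *: br x z.
Proof. by have := br_bilin.1 c x 0 z; rewrite !addr0 br0l addr0. Qed.
Lemma brZr c x z : br z (c *: x) = c *: br z x.
Proof. by have := br_bilin.2 c x 0 z; rewrite !addr0 br0r addr0. Qed.
Lemma brNl x z : br (- x) z = - br x z.
Proof. by rewrite -scaleN1r brZl scaleN1r. Qed.
Lemma brNr x z : br z (- x) = - br z x.
Proof. by rewrite -scaleN1r brZr scaleN1r. Qed.
Lemma brC x y : br x y = - br y x.
Proof. exact: br_skew. Qed.
Lemma brxx x : br x x = 0.
Proof.
have : (2 : R) *: br x x = 0 by rewrite scaler_nat mulr2n {1}brC addNr.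
by move/eqP; rewrite scaler_eq0 pnatr_eq0 => /eqP.
Qed.

Ltac br_expand := repeat first [rewrite brDl | rewrite brDr | rewrite brZl | rewrite brZr
  | rewrite brNl | rewrite brNr | rewrite brxx | rewrite br0l | rewrite br0r].

Lemma affine_map_horiz_affine f : affine_map f -> horiz_affine br f.
Proof.
move=> [c [a [b fE]]] p y.
exists (c + (p.1 *m a) 0 0 + (p.2 *m b) 0 0), ((y *m a) 0 0 + (br p.1 y *m b) 0 0) => t.
by rewrite /carnot_mul /= fE addr0 brZr !mulmxDl -!scalemxAl !mxE; ring.
Qed.

Definition spanning_triple x a b := det3 (br x a) (br x b) (br a b) != 0.

Section HorizontallyAffine.
Variable f : 'rV[R]_n * 'rV[R]_3 -> R.
Hypothesis f_horiz : horiz_affine br f.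

(* The coset of (x0, z0) under the Heisenberg subgroup generated by (a, 0) and
   (b, 0), in the coordinates (s, t, c) of (s a + t b, c [a, b]). *)
Lemma horiz_affine_heis_coset x0 z0 a b : exists k0 k1 k2 k3, forall s t c,
  f (x0 + (s *: a + t *: b), z0 + c *: br a b + br x0 (s *: a + t *: b))
  = k0 + k1 * s + k2 * t + k3 * c.
Proof.
apply: (heis_horiz_affine (g := fun s t c =>
  f (x0 + (s *: a + t *: b), z0 + c *: br a b + br x0 (s *: a + t *: b)))) => s0 t0 c0 l m.
apply: affine_R_ext (f_horiz (x0 + (s0 *: a + t0 *: b),
  z0 + c0 *: br a b + br x0 (s0 *: a + t0 *: b)) (l *: a + m *: b)) => r /=.
rewrite /carnot_mul /=; congr (f (_, _)); first by vec_ring.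
by br_expand; rewrite ?(brC b a); vec_ring.
Qed.

Definition fvert z := f (0, z).
Definition fhor z x := f (x, z) - f (0, z).

Lemma fhorE x z : f (x, z) = fvert z + fhor z x.
Proof. by rewrite /fhor /fvert addrC subrK. Qed.

Lemma f_along_bracket x z a b : affine_R (fun c => f (x, z + c *: br a b)).
Proof.
have [k0 [k1 [k2 [k3 K]]]] := horiz_affine_heis_coset x z a b.
exists k0, k3 => c; have := K 0 0 c; rewrite !mulr0 !addr0 => <-.
by congr (f (_, _)); br_expand; vec_ring.
Qed.

Lemma fhor_lin z a b s t : fhor z (s *: a + t *: b) = s * fhor z a + t * fhor z b.
Proof.
have [k0 [k1 [k2 [k3 K]]]] := horiz_affine_heis_coset 0 z a b.
have E s' t' : f (s' *: a + t' *: b, z) = k0 + k1 * s' + k2 * t'.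
  by rewrite -[RHS]addr0 -(mulr0 k3) -K; congr (f (_, _)); br_expand; vec_ring.
have := E 1 0; have := E 0 1; have := E 0 0.
rewrite !scale0r !scale1r !addr0 add0r => E0 Eb Ea.
by rewrite /fhor E Ea Eb E0; ring.
Qed.

Lemma fhorD z x y : fhor z (x + y) = fhor z x + fhor z y.
Proof. by have := fhor_lin z x y 1 1; rewrite !scale1r !mul1r. Qed.

Lemma fhorZ z c x : fhor z (c *: x) = c * fhor z x.
Proof. by have := fhor_lin z x x c 0; rewrite scale0r addr0 mul0r addr0. Qed.

Lemma fhor_along_bracket z y a b : affine_R (fun c => fhor (z + c *: br a b) y).
Proof.
exact: affine_R_ext (affine_RD (f_along_bracket y z a b) (affine_RN (f_along_bracket 0 z a b))).
Qed.

Lemma fhor_shift x y z c : fhor (z + c *: br x y) y = fhor z y.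
Proof.
rewrite -brZl; move: (c *: x) => {c}x.
have line : affine_R (fun t => f (x + t *: y, z + t *: br x y)).
  apply: affine_R_ext (f_horiz (x, z) y) => t /=.
  by rewrite /carnot_mul /=; congr (f (_, _)); br_expand; vec_ring.
(* [t * phi t] is affine and [phi] is affine, so [phi] is constant. *)
have tphi : affine_R (fun t => t * fhor (z + t *: br x y) y).
  apply: affine_R_ext (affine_RD line (affine_RN (f_along_bracket x z x y))) => t /=.
  by rewrite fhorE fhorD fhorZ [f (x, _)]fhorE; ring.
have := affine_R_diff2 tphi; rewrite /= (affine_R_interp (fhor_along_bracket z y x y) 2).
rewrite scale1r scale0r addr0; lra.
Qed.

Lemma fhor_shift' x y z c : fhor (z + c *: br y x) y = fhor z y.
Proof. by rewrite brC scalerN -scaleNr fhor_shift. Qed.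

Lemma fvert_bracket_plane x z a b : exists k0 k1 k2, forall s t,
  fvert (z + br x (s *: a + t *: b)) = k0 + k1 * s + k2 * t.
Proof.
have [k0 [k1 [k2 [k3 K]]]] := horiz_affine_heis_coset x z a b.
exists (k0 - fhor z x), (k1 - fhor z a), (k2 - fhor z b) => s t.
set y := s *: a + t *: b.
have := K s t 0; rewrite -/y scale0r addr0 fhorE fhorD.
rewrite -[br x y]scale1r fhor_shift' fhor_shift /y fhor_lin => E.
by apply: (addIr (fhor z x + (s * fhor z a + t * fhor z b))); rewrite E; ring.
Qed.

Lemma fvert_triple x0 a b z0 : exists e0 e1 e2 e3, forall s t c,
  fvert (z0 + (s *: br x0 a + t *: br x0 b + c *: br a b)) = e0 + e1 * s + e2 * t + e3 * c.
Proof.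
have [k0 [k1 [k2 [k3 K]]]] := horiz_affine_heis_coset x0 z0 a b.
have [g0 [g1 G]] := fhor_along_bracket z0 x0 a b.
have [p0 [p1 Pa]] := fhor_along_bracket z0 a x0 b.
have [q0 [q1 Pb]] := fhor_along_bracket z0 b x0 a.
have FE s t c : fvert (z0 + (s *: br x0 a + t *: br x0 b + c *: br a b))
    = k0 + k1 * s + k2 * t + k3 * c - (g0 + g1 * c) - s * (p0 + p1 * t) - t * (q0 + q1 * s).
  set Z := z0 + c *: br a b + br x0 (s *: a + t *: b).
  have -> : z0 + (s *: br x0 a + t *: br x0 b + c *: br a b) = Z by rewrite /Z; br_expand; vec_ring.
  have Ex : fhor Z x0 = g0 + g1 * c by rewrite -G /Z -[br x0 _]scale1r fhor_shift'.
  have Ea : fhor Z a = p0 + p1 * t.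
    rewrite -Pa (_ : Z = z0 + t *: br x0 b + s *: br x0 a + c *: br a b); last first.
      by rewrite /Z; br_expand; vec_ring.
    by rewrite fhor_shift' fhor_shift.
  have Eb : fhor Z b = q0 + q1 * s.
    rewrite -Pb (_ : Z = z0 + s *: br x0 a + t *: br x0 b + c *: br a b); last first.
      by rewrite /Z; br_expand; vec_ring.
    by rewrite !fhor_shift.
  have := K s t c; rewrite -/Z fhorE !fhorD !fhorZ Ex Ea Eb => E.
  by rewrite -E; ring.
have [m0 [m1 [m2 M]]] := fvert_bracket_plane x0 z0 a b.
have FM s t : fvert (z0 + (s *: br x0 a + t *: br x0 b + 0 *: br a b)) = m0 + m1 * s + m2 * t.
  by rewrite -M; congr fvert; br_expand; vec_ring.
(* At c = 0 the function is affine in (s, t), which kills the term s t. *)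
have pq : p1 + q1 = 0.
  by have := FM 1 1; have := FM 1 0; have := FM 0 1; have := FM 0 0; rewrite !FE; lra.
exists (k0 - g0), (k1 - p0), (k2 - q0), (k3 - g1) => s t c.
by rewrite FE (_ : q1 = - p1); [ring | lra].
Qed.

Lemma affine_map_of_split : affine3 fvert -> (forall z x, fhor z x = fhor 0 x) -> affine_map f.
Proof.
move=> [e [bv fvE]] fhor_const.
pose phi x : 'rV[R]_1 := (fhor 0 x)%:M.
have phiD : {morph phi : x y / x + y} by move=> x y; rewrite /phi fhorD raddfD.
have phiZ c x : phi (c *: x) = c *: phi x by rewrite /phi fhorZ scale_scalar_mx.
exists e, (lin1_mx phi), bv^T => x z.
rewrite fhorE fvE fhor_const (mul_rV_lin1_additive phiD phiZ) dot3_mulmx.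
by rewrite [phi x 0 0]mxE eqxx mulr1n addrAC.
Qed.

Lemma fhor_affine3_of_spanning x a b : spanning_triple x a b -> affine3 (fhor^~ x).
Proof.
move=> xab; have [g0 [g1 G]] := fhor_along_bracket 0 x a b.
apply: (affine3_basis (e0 := g0) (e1 := 0) (e2 := 0) (e3 := g1) xab) => s t c.
rewrite -[_ + _ + _]add0r (_ : 0 + _ = 0 + c *: br a b + s *: br x a + t *: br x b).
  by rewrite !fhor_shift' G; ring.
by rewrite !add0r addrC addrA.
Qed.

Section SpanningTriple.
Variables x0 a b : 'rV[R]_n.
Hypothesis x0ab : spanning_triple x0 a b.

Lemma spanning_fvert_affine3 : affine3 fvert.
Proof.
have [e0 [e1 [e2 [e3 E]]]] := fvert_triple x0 a b 0.
apply: (affine3_basis (e0 := e0) (e1 := e1) (e2 := e2) (e3 := e3) x0ab) => s t c.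
by rewrite -E add0r.
Qed.

Lemma spanning_fhor_affine3 y : affine3 (fhor^~ y).
Proof.
have [e [e0 xyab]] := det3_perturb2 (br y a) (br y b) x0ab.
have xyab' : spanning_triple (x0 + e *: y) a b by rewrite /spanning_triple !brDl !brZl.
apply: (affine3_ext (h1 := fun z => e^-1 * (fhor z (x0 + e *: y) + (-1) * fhor z x0))).
  by move=> z /=; rewrite fhorD fhorZ; field.
apply: affine3Z; apply: affine3D; first exact: fhor_affine3_of_spanning xyab'.
by apply: affine3Z; apply: fhor_affine3_of_spanning x0ab.
Qed.

Definition fobs y z := fhor z y - fhor 0 y.

Lemma fobsDl y1 y2 z : fobs (y1 + y2) z = fobs y1 z + fobs y2 z.
Proof. by rewrite /fobs !fhorD; ring. Qed.

Lemma fobsZl c y z : fobs (c *: y) z = c * fobs y z.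
Proof. by rewrite /fobs !fhorZ; ring. Qed.

Lemma fobs_bracket x y : fobs y (br x y) = 0.
Proof. by rewrite /fobs -[br x y]scale1r -[_ *: _]add0r fhor_shift subrr. Qed.

Lemma spanning_fobs_dot3 y : exists bv, forall z, fobs y z = dot3 bv z.
Proof.
have [e [bv H]] := spanning_fhor_affine3 y.
by exists bv => z; rewrite /fobs !H dot30r; ring.
Qed.

Lemma spanning_fobs_neq0 : ~ affine_map f -> exists y z, fobs y z != 0.
Proof.
move=> nonaff; apply: contrapT => fobs0; apply/nonaff/affine_map_of_split.
  exact: spanning_fvert_affine3.
move=> z x; apply/eqP; rewrite -subr_eq0 -[_ - _]/(fobs x z).
by apply: contraT => nz; case: fobs0; exists x, z.
Qed.

End SpanningTriple.

Lemma fhor_const_of_ad_full x b c d : det3 (br x b) (br x c) (br x d) != 0 ->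
  forall z, fhor z x = fhor 0 x.
Proof.
move=> D0 z; have [s [t [r ->]]] := det3_neq0_span D0 z.
rewrite (_ : _ + _ = 0 + 1 *: br x (s *: b + t *: c + r *: d)); first by rewrite fhor_shift'.
by br_expand; vec_ring.
Qed.

Lemma affine_map_of_ad_full x b c d : det3 (br x b) (br x c) (br x d) != 0 -> affine_map f.
Proof.
move=> D0; apply: affine_map_of_split.
  pose phi y := fvert (0 + br x y).
  have phi_plane a' b' : exists k0 k1 k2, forall s t,
      phi (s *: a' + t *: b') = k0 + k1 * s + k2 * t by exact: fvert_bracket_plane.
  apply: (affine3_basis (e0 := phi 0) (e1 := phi b - phi 0) (e2 := phi c - phi 0)
    (e3 := phi d - phi 0) D0) => s t r.
  rewrite (_ : _ + _ = 0 + br x (s *: b + t *: c + r *: d)); last by br_expand; vec_ring.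
  by rewrite -/(phi _) (affine_planes_span3 phi_plane); ring.
move=> z y.
have [e [e0 D0']] := det3_perturb3 (br y b) (br y c) (br y d) D0.
have := @fhor_const_of_ad_full (x + e *: y) b c d; rewrite !brDl !brZl => /(_ D0' z).
by rewrite !fhorD !fhorZ (fhor_const_of_ad_full D0) => /addrI /(mulfI e0).
Qed.

End HorizontallyAffine.

(** * Brackets without a spanning triple *)

Section Spanning.
Hypothesis br_span : bracket_spans br.

Lemma dot3_brackets_eq0 m : (forall p q, dot3 m (br p q) = 0) -> m = 0.
Proof.
move=> H; apply: dot3_all0 => z; have [k [cf [xs [ys ->]]]] := br_span z.
rewrite (big_morph (dot3 m) (fun u v => dot3Dr u v m) (dot30r m)).
by apply: big1 => i _; rewrite dot3Zr H mulr0.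
Qed.

Lemma cross3_brackets_eq0 u : (forall p q, cross3 u (br p q) = 0) -> u = 0.
Proof.
move=> H; apply: cross3_all0 => z; have [k [cf [xs [ys ->]]]] := br_span z.
rewrite (big_morph (cross3 u) (fun v w => cross3Dr v w u) (cross30r u)).
by apply: big1 => i _; rewrite cross3Zr H scaler0.
Qed.

Section Degenerate.
Hypothesis triple_det0 : forall x a b, det3 (br x a) (br x b) (br a b) = 0.
Hypothesis ad_det0 : forall x b c d, det3 (br x b) (br x c) (br x d) = 0.

(* ad x has rank 2, so [x, c'] lies in the plane of [x, a], [x, b]; together
   with det ([x, a], [x, c'], [a, c']) = 0 this puts [a, c'] in that plane. *)
Lemma ad_cross_orth_bracket x a b c : cross3 (br x a) (br x b) != 0 ->
  dot3 (cross3 (br x a) (br x b)) (br a c) = 0.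
Proof.
set m := cross3 (br x a) (br x b) => m0.
have mm : dot3 m m != 0 by rewrite dot3_self_eq0.
have orth c' : dot3 m (cross3 (br x a) (br x c')) != 0 -> dot3 m (br a c') = 0.
  move=> mw; have := cross3_plane_decomp (br x a) (br x b) (br x c').
  rewrite -/m ad_det0 scale0r add0r => PD.
  have : dot3 m m * det3 (br x a) (br x c') (br a c')
         = dot3 (cross3 (br x a) (br x c')) m * dot3 m (br a c').
    by rewrite -det3Zm PD det3Dm !det3Zm det3uu mulr0 add0r /det3 -/m dot3C.
  rewrite triple_det0 mulr0 dot3C => /esym/eqP; rewrite mulf_eq0 (negbTE mw) /=.
  exact/eqP.
have [mw|mw] := eqVneq (dot3 m (cross3 (br x a) (br x c))) 0; last exact: orth.
have mab : dot3 m (br a b) = 0 := triple_det0 x a b.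
have := orth (c + b); rewrite !brDr cross3Dr !dot3Dr mw add0r mab addr0.
by apply; exact: mm.
Qed.

(* The orthogonality of [ad_cross_orth_bracket] is transported from [a, d] to
   [c, d] by trading a for a' := N c + (N - g) a, whose bracket with x stays in
   the plane of [x, a] and [x, b]. *)
Lemma ad_cross_eq0 x a b : cross3 (br x a) (br x b) = 0.
Proof.
have [//|m0] := eqVneq (cross3 (br x a) (br x b)) 0.
set u := br x a; set v := br x b; set m := cross3 u v.
have mm : dot3 m m != 0 by rewrite dot3_self_eq0.
apply: dot3_brackets_eq0 => c d.
set N := dot3 m m; set g := dot3 (cross3 (br x c) v) m.
have := cross3_plane_decomp u v (br x c); rewrite -/m ad_det0 scale0r add0r -/N -/g => PD.
pose a' := N *: c + (N - g) *: a.
have Cm : cross3 (br x a') v = N *: m.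
  have -> : br x a' = N *: u + dot3 (cross3 u (br x c)) m *: v.
    by rewrite /a' brDr !brZr PD -/u; vec_ring.
  by rewrite cross3Dl !cross3Zl cross3uu scaler0 addr0.
have : N * dot3 m (br a' d) = 0.
  by rewrite -dot3Zl -Cm ad_cross_orth_bracket // Cm scaler_eq0 negb_or mm.
rewrite /a' brDl !brZl dot3Dr !dot3Zr (ad_cross_orth_bracket d m0) mulr0 addr0.
by move/eqP; rewrite !mulf_eq0 (negbTE mm) => /eqP.
Qed.

(* Every ad x now has rank at most 1, and a nonzero [x, a] turns out to be
   parallel to every bracket. *)
Lemma degenerate_brackets_false : False.
Proof.
have [[x [a xa]] | all0] := pselect (exists x a, br x a != 0); last first.
  have e0 : mk3 1 0 0 = 0 :> 'rV[R]_3.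
    apply: dot3_brackets_eq0 => p q.
    have /eqP -> : br p q == 0 by apply: contrapT => /negP pq; apply: all0; exists p, q.
    exact: dot30r.
  by have := mk3_neq0 R; rewrite e0 eqxx.
suff xa0 : br x a = 0 by rewrite xa0 eqxx in xa.
apply: cross3_brackets_eq0 => c d; set u := br x a.
have [xc|xc] := eqVneq (br x c) 0; last first.
  apply: (@cross3_eq0_trans _ _ (br x c)) => //; first exact: ad_cross_eq0.
  by rewrite (brC x c) cross3Nl ad_cross_eq0 oppr0.
have [ac|ac] := eqVneq (br a c) 0; last first.
  apply: (@cross3_eq0_trans _ _ (br a c)) => //.
    by rewrite /u (brC x a) cross3Nr ad_cross_eq0 oppr0.
  by rewrite (brC a c) cross3Nl ad_cross_eq0 oppr0.
have := ad_cross_eq0 (c + x) a d.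
by rewrite !brDl (brC c a) ac oppr0 add0r cross3Dr -/u (ad_cross_eq0 x a d) addr0.
Qed.

End Degenerate.

Lemma spanning_triple_or_ad_full :
  (exists x a b, spanning_triple x a b) \/ exists x b c d, det3 (br x b) (br x c) (br x d) != 0.
Proof.
apply: contrapT => /not_orP [no_triple no_ad]; apply: degenerate_brackets_false.
  move=> x a b; apply/eqP/negP => xab; apply: no_triple; exists x, a, b; exact/negP.
move=> x b c d; apply/eqP/negP => xbcd; apply: no_ad; exists x, b, c, d; exact/negP.
Qed.

End Spanning.

(** * The obstruction form and the isomorphism with F_3 x R^d *)

Section Obstruction.
Variable B : 'rV[R]_n -> 'rV[R]_3 -> R.
Hypothesis BDl : forall y1 y2 z, B (y1 + y2) z = B y1 z + B y2 z.
Hypothesis BZl : forall c y z, B (c *: y) z = c * B y z.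
Hypothesis B_dot3 : forall y, exists bv, forall z, B y z = dot3 bv z.
Hypothesis B_bracket : forall x y, B y (br x y) = 0.

Lemma BDr y z1 z2 : B y (z1 + z2) = B y z1 + B y z2.
Proof. by have [bv H] := B_dot3 y; rewrite !H dot3Dr. Qed.
Lemma BZr y c z : B y (c *: z) = c * B y z.
Proof. by have [bv H] := B_dot3 y; rewrite !H dot3Zr. Qed.
Lemma BNr y z : B y (- z) = - B y z.
Proof. by rewrite -scaleN1r BZr mulN1r. Qed.
Lemma BNl y z : B (- y) z = - B y z.
Proof. by rewrite -scaleN1r BZl mulN1r. Qed.

Definition obs3 x y u := B y (br x u).

Lemma obs3_swap23 x y u : obs3 x y u = - obs3 x u y.
Proof.
have := B_bracket x (y + u); rewrite brDr BDl !BDr !B_bracket /obs3 add0r addr0.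
by move/eqP; rewrite addr_eq0 => /eqP.
Qed.
Lemma obs3_swap13 x y u : obs3 x y u = - obs3 u y x.
Proof. by rewrite /obs3 brC BNr. Qed.
Lemma obs3_swap12 x y u : obs3 x y u = - obs3 y x u.
Proof. by rewrite obs3_swap13 obs3_swap23 opprK obs3_swap13. Qed.
Lemma obs3_xxu x u : obs3 x x u = 0.
Proof. by have := obs3_swap12 x x u; lra. Qed.
Lemma obs3_xuu x u : obs3 x u u = 0.
Proof. by have := obs3_swap23 x u u; lra. Qed.
Lemma obs3_xux x u : obs3 x u x = 0.
Proof. by have := obs3_swap13 x u x; lra. Qed.

Section Frame.
Variables a1 a2 a3 : 'rV[R]_n.
Hypothesis frame : obs3 a1 a2 a3 != 0.
Let tau := obs3 a1 a2 a3.

Definition frame_coord x : 'rV[R]_3 :=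
  mk3 (obs3 x a2 a3 / tau) (obs3 a1 x a3 / tau) (obs3 a1 a2 x / tau).
Definition frame_rest x := x - frame_coord x *m rows3 a1 a2 a3.
Definition frame_brackets := rows3 (br a1 a2) (br a1 a3) (br a2 a3).

Lemma frame_coordD : {morph frame_coord : x y / x + y}.
Proof.
by move=> x y; apply: row3_eq; rewrite !mxE /= /obs3 ?brDl ?brDr ?BDl ?BDr mulrDl.
Qed.

Lemma frame_coordZ c x : frame_coord (c *: x) = c *: frame_coord x.
Proof.
by apply: row3_eq; rewrite !mxE /= /obs3 ?brZl ?brZr ?BZl ?BZr mulrA.
Qed.

Lemma frame_coord_frame :
  rows3 a1 a2 a3 *m lin1_mx frame_coord = rows3 (mk3 1 0 0) (mk3 0 1 0) (mk3 0 0 1).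
Proof.
rewrite rows3_mul !(mul_rV_lin1_additive frame_coordD frame_coordZ).
by rewrite /frame_coord ?obs3_xxu ?obs3_xuu ?obs3_xux ?mul0r divff.
Qed.

Lemma frame_dets (b1 b2 b3 : 'rV[R]_3) :
  (forall z, B a1 z = dot3 b1 z) -> (forall z, B a2 z = dot3 b2 z) ->
  (forall z, B a3 z = dot3 b3 z) ->
  det3 b1 b2 b3 * det3 (br a1 a2) (br a1 a3) (br a2 a3) = - tau ^+ 3.
Proof.
move=> Hb1 Hb2 Hb3; rewrite -det3_dot3 -!Hb1 -!Hb2 -!Hb3 -!/(obs3 _ _ _).
rewrite !obs3_xxu !obs3_xuu (obs3_swap12 a2 a1 a3) (obs3_swap23 a1 a3 a2) -/tau.
by rewrite /det3 /dot3 /cross3 /mk3 !mxE /=; ring.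
Qed.

Lemma frame_dets_neq0 (b1 b2 b3 : 'rV[R]_3) :
  (forall z, B a1 z = dot3 b1 z) -> (forall z, B a2 z = dot3 b2 z) ->
  (forall z, B a3 z = dot3 b3 z) ->
  det3 b1 b2 b3 != 0 /\ det3 (br a1 a2) (br a1 a3) (br a2 a3) != 0.
Proof.
move=> Hb1 Hb2 Hb3.
have : det3 b1 b2 b3 * det3 (br a1 a2) (br a1 a3) (br a2 a3) != 0.
  by rewrite frame_dets // oppr_eq0 expf_neq0.
by rewrite mulf_eq0 negb_or => /andP.
Qed.

Lemma frame_brackets_det : det3 (br a1 a2) (br a1 a3) (br a2 a3) != 0.
Proof.
have [b1 Hb1] := B_dot3 a1; have [b2 Hb2] := B_dot3 a2; have [b3 Hb3] := B_dot3 a3.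
exact: (frame_dets_neq0 Hb1 Hb2 Hb3).2.
Qed.

Lemma B_frame_rest x w : B (frame_rest x) w = 0.
Proof.
have [s [t [c ->]]] := det3_neq0_span frame_brackets_det w.
rewrite /frame_rest mul_rows3 !mxE /= !BDr !BZr !BDl !BNl !BDl !BZl -!/(obs3 _ _ _).
rewrite ?obs3_xxu ?obs3_xuu ?obs3_xux (obs3_swap23 a1 a3 a2) (obs3_swap12 a2 a1 a3) -/tau.
rewrite (obs3_swap23 a1 x a2) (obs3_swap12 a2 x a3).
by field.
Qed.

Lemma br_frame_rest x u : br (frame_rest x) u = 0.
Proof.
have [b1 Hb1] := B_dot3 a1; have [b2 Hb2] := B_dot3 a2; have [b3 Hb3] := B_dot3 a3.
have [Db _] := frame_dets_neq0 Hb1 Hb2 Hb3.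
apply: (scalerI Db); rewrite scaler0 cramer3_dual -Hb1 -Hb2 -Hb3 -!/(obs3 _ _ _).
by rewrite !(obs3_swap12 (frame_rest x)) /obs3 !B_frame_rest oppr0 !scale0r !addr0.
Qed.

Lemma br_frame_coord x y :
  br x y = wedge3 (frame_coord x) (frame_coord y) *m frame_brackets.
Proof.
have xE z : z = frame_coord z *m rows3 a1 a2 a3 + frame_rest z by rewrite addrC subrK.
rewrite {1}(xE x) {1}(xE y); move: (br_frame_rest x) (br_frame_rest y).
move: (frame_rest x) (frame_rest y) => rx ry rx0 ry0.
rewrite brDl !brDr !rx0 (brC _ ry) !ry0 oppr0 !addr0 /frame_brackets !mul_rows3; br_expand.
rewrite (brC a2 a1) (brC a3 a1) (brC a3 a2) /wedge3 !mxE /=; vec_ring.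
Qed.

Lemma iso_of_frame : exists d, carnot_isomorphic br (@F3Rd_bracket R d).
Proof.
set A := lin1_mx frame_coord.
have fullA : row_full A.
  by apply/row_fullP; exists (rows3 a1 a2 a3); rewrite frame_coord_frame rows3_id.
have [d [C [Q [QP PQ]]]] := row_full_extend fullA.
have N_unit := rows3_unit frame_brackets_det.
exists d, (row_mx A C), (invmx frame_brackets); split.
  move=> x y; rewrite /F3Rd_bracket !mul_mx_row !row_mxKl.
  rewrite !(mul_rV_lin1_additive frame_coordD frame_coordZ) br_frame_coord.
  by rewrite -mulmxA mulmxV // mulmx1.
exact: bijective_mulmx_pair PQ QP (mulVmx N_unit) (mulmxV N_unit).
Qed.

End Frame.

Lemma iso_of_obstruction : bracket_spans br -> (exists y z, B y z != 0) ->
  exists d, carnot_isomorphic br (@F3Rd_bracket R d).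
Proof.
move=> br_span [y [z Byz]].
have [[p [q Bpq]] | B_br0] := pselect (exists p q, B y (br p q) != 0).
  exact: (@iso_of_frame p y q).
have [bv Hbv] := B_dot3 y.
suff bv0 : bv = 0 by move: Byz; rewrite Hbv bv0 dot30l eqxx.
apply: (dot3_brackets_eq0 br_span) => p q; rewrite -Hbv.
by apply: contrapT => /eqP Bpq; apply: B_br0; exists p, q.
Qed.

End Obstruction.

Lemma iso_of_horiz_nonaffine f : bracket_spans br -> horiz_affine br f -> ~ affine_map f ->
  exists d, carnot_isomorphic br (@F3Rd_bracket R d).
Proof.
move=> br_span f_horiz nonaff.
have [[x [a [b xab]]] | [x [b [c [d xbcd]]]]] := spanning_triple_or_ad_full br_span.
  exact: iso_of_obstruction (fobsDl f_horiz) (fobsZl f_horiz) (spanning_fobs_dot3 f_horiz xab)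
    (fobs_bracket f_horiz) br_span (spanning_fobs_neq0 f_horiz xab nonaff).
by exfalso; exact: nonaff (affine_map_of_ad_full f_horiz xbcd).
Qed.

(** * The model function on F_3 x R^d *)

(* [wedge12 u w] is the coefficient of e1^e2^e3 in u ^ w for u in Lambda^1 and
   w in Lambda^2, in the bases used by [wedge3]. *)
Definition wedge12 (u w : 'rV[R]_3) : R := u 0 0 * w 0 2 - u 0 1 * w 0 1 + u 0 2 * w 0 0.

Lemma wedge12_line (X Y Z : 'rV[R]_3) t :
  wedge12 (X + t *: Y) (Z + t *: wedge3 X Y) = wedge12 X Z + wedge12 Y Z * t.
Proof. by rewrite /wedge12 /wedge3 !mxE /=; ring. Qed.

Section IsoWedge.
Variables (d : nat) (P1 : 'M[R]_(n, 3 + d)) (P2 : 'M[R]_(3, 3)).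
Hypothesis P_morph : forall x y, br x y *m P2 = @F3Rd_bracket R d (x *m P1) (y *m P1).
Hypothesis P_bij : bijective (fun p : 'rV[R]_n * 'rV[R]_3 => (p.1 *m P1, p.2 *m P2)).

Definition iso_wedge (p : 'rV[R]_n * 'rV[R]_3) := wedge12 (lsubmx (p.1 *m P1)) (p.2 *m P2).

Lemma iso_wedge_horiz_affine : horiz_affine br iso_wedge.
Proof.
move=> [x z] y /=; exists (iso_wedge (x, z)), (wedge12 (lsubmx (y *m P1)) (z *m P2)) => t.
rewrite /iso_wedge /carnot_mul /= addr0 brZr !mulmxDl -!scalemxAl P_morph /F3Rd_bracket.
rewrite (_ : lsubmx (x *m P1 + t *: (y *m P1)) = lsubmx (x *m P1) + t *: lsubmx (y *m P1)).
  by rewrite wedge12_line; ring.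
by apply/rowP => i; rewrite !mxE.
Qed.

Lemma iso_wedge_nonaffine : ~ affine_map iso_wedge.
Proof.
case: P_bij => g gK Kg [c [a [b fE]]].
pose p1 := (g (row_mx (mk3 1 0 0) (0 : 'rV[R]_d), 0)).1.
pose p2 := (g (0, mk3 0 0 1)).2.
have E1 : p1 *m P1 = row_mx (mk3 1 0 0) 0.
  by have := Kg (row_mx (mk3 1 0 0) 0, 0) => /(congr1 fst).
have E2 : p2 *m P2 = mk3 0 0 1 by have := Kg (0, mk3 0 0 1) => /(congr1 snd).
have L0 : lsubmx (0 : 'rV[R]_(3 + d)) = 0 by apply/rowP => i; rewrite !mxE.
(* iso_wedge vanishes at (0, 0), (p1, 0), (0, p2) but not at (p1, p2). *)
have := fE 0 0; have := fE p1 0; have := fE 0 p2; have := fE p1 p2.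
by rewrite /iso_wedge /= E1 E2 !mul0mx row_mxKl L0 /wedge12 !mxE /=; lra.
Qed.

End IsoWedge.
End Bracket.

Unset Implicit Arguments.

Theorem proposition6p12 (R : realType) (n : nat)
  (br : 'rV[R]_n -> 'rV[R]_n -> 'rV[R]_3) :
  step_two_carnot br ->
  (((forall f : 'rV[R]_n * 'rV[R]_3 -> R, affine_map f -> horiz_affine br f) /\
    (exists f : 'rV[R]_n * 'rV[R]_3 -> R, horiz_affine br f /\ ~ affine_map f))
   <->
   (exists d : nat, carnot_isomorphic br (@F3Rd_bracket R d))).
Proof.
case=> _ [br_bilin [br_skew br_span]]; split.
  case=> _ [f [f_horiz nonaff]].
  exact (iso_of_horiz_nonaffine br_bilin br_skew br_span f_horiz nonaff).
case=> d [P1 [P2 [P_morph P_bij]]]; split; first exact (affine_map_horiz_affine br_bilin).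
exists (iso_wedge P1 P2); split; first exact (iso_wedge_horiz_affine br_bilin P_morph).
exact (iso_wedge_nonaffine P_bij).
Qed.
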